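(* Let $d\ge1$, let $H$ be a hypergraph of $d$-intervals and let $w$ be a weight system on $H$. Then $\tau_w(H)\le d\,\tau^*_w(H)$.
   Context: A $d$-interval is a union of at most $d$ pairwise disjoint closed intervals of the real line $\mathbb{R}$. A hypergraph of $d$-intervals is a finite family $H$ of $d$-intervals, regarded as a hypergraph whose vertices are the points of $\mathbb{R}$ and whose edges are the members of $H$. A weight system on $H$ is a function $w:H\to\mathbb{N}$. A $w$-cover is a finitely supported function $g:\mathbb{R}\to\mathbb{N}$ with $\sum_{v\in h}g(v)\ge w(h)$ for every $h\in H$; $\tau_w(H)$ is the minimum of $\sum_v g(v)$ over all $w$-covers. A fractional $w$-cover is defined in the same way but with $g:\mathbb{R}\to\mathbb{R}_{\ge0}$ (finitely supported); $\tau^*_w(H)$ is the infimum of $\sum_v g(v)$ over all fractional $w$-covers. *)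

From Stdlib Require Import Reals List Lia Lra.
Import ListNotations.
Open Scope R_scope.

(* A closed interval [a,b] is represented by the pair (a,b) with a <= b. *)
Definition interval : Type := (R * R)%type.

Definition is_dinterval (d : nat) (I : list interval) : Prop :=
  (length I <= d)%nat /\
  Forall (fun p => fst p <= snd p) I /\
  ForallOrdPairs (fun p q => snd p < fst q \/ snd q < fst p) I.

Definition in_intervalb (p : interval) (v : R) : bool :=
  if Rle_dec (fst p) v then (if Rle_dec v (snd p) then true else false) else false.

Definition in_dintervalb (I : list interval) (v : R) : bool :=
  existsb (fun p => in_intervalb p v) I.

(* A hypergraph of d-intervals is a finite family H (a list, edge i = nth i H);
   a weight system is w : nat -> nat, w i being the weight of edge i. *)

Definition nat_mass (S : list R) (g : R -> nat) (I : list interval) : nat :=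
  fold_right (fun v acc => ((if in_dintervalb I v then g v else 0) + acc)%nat) 0%nat S.

Definition nat_total (S : list R) (g : R -> nat) : nat :=
  fold_right (fun v acc => (g v + acc)%nat) 0%nat S.

Definition is_w_cover (H : list (list interval)) (w : nat -> nat)
    (S : list R) (g : R -> nat) : Prop :=
  NoDup S /\ (forall v, ~ In v S -> g v = 0%nat) /\
  (forall i, (i < length H)%nat -> (w i <= nat_mass S g (nth i H []))%nat).

Definition tau_w (H : list (list interval)) (w : nat -> nat) (t : nat) : Prop :=
  (exists S g, is_w_cover H w S g /\ nat_total S g = t) /\
  (forall S g, is_w_cover H w S g -> (t <= nat_total S g)%nat).

Definition real_mass (S : list R) (g : R -> R) (I : list interval) : R :=
  fold_right (fun v acc => (if in_dintervalb I v then g v else 0) + acc) 0 S.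

Definition real_total (S : list R) (g : R -> R) : R :=
  fold_right (fun v acc => g v + acc) 0 S.

Definition is_frac_w_cover (H : list (list interval)) (w : nat -> nat)
    (S : list R) (g : R -> R) : Prop :=
  NoDup S /\ (forall v, 0 <= g v) /\ (forall v, ~ In v S -> g v = 0) /\
  (forall i, (i < length H)%nat -> INR (w i) <= real_mass S g (nth i H [])).

Definition is_glb (E : R -> Prop) (m : R) : Prop :=
  (forall x, E x -> m <= x) /\ (forall b, (forall x, E x -> b <= x) -> b <= m).

Definition tau_star_w (H : list (list interval)) (w : nat -> nat) (t : R) : Prop :=
  is_glb (fun x => exists S g, is_frac_w_cover H w S g /\ real_total S g = x) t.

(* Let g be a fractional w-cover supported on a finite set S of
   points and put f = d * g.  Order the points of S along the line and round
   the cumulative mass of f: the point v receives the integer weight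
     jump v = up (f-mass of S on ]-oo, v]) - up (f-mass of S on ]-oo, v[),
   where up x = floor x + 1.  These weights telescope: over any closed
   interval [a, b] their sum is the difference of the rounded cumulative
   masses at the two ends (lemma [jump_telescope]).  Hence
   - the rounded cover has total at most the total of f = d * total g, and
   - it puts weight >= k on [a, b] whenever f puts real mass >= k there.
   Finally, by pigeonhole, every edge h (a union of at most d intervals) has
   a component interval J carrying at least 1/d of the g-mass of h, i.e.
   f-mass on J >= g-mass on h >= w(h).  So the rounding is an integral
   w-cover of total <= d * total g, and t / d is a lower bound of the
   fractional covers, whence t / d <= tau*_w. *)

From Stdlib Require Import Reals List ZArith Lia Lra Wf_nat.
Import ListNotations.
Open Scope R_scope.

Definition lsum {A : Type} (l : list A) (p : A -> R) : R :=
  fold_right (fun v acc => p v + acc) 0 l.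

Lemma lsum_ext {A : Type} (l : list A) (p q : A -> R) :
  (forall v, In v l -> p v = q v) -> lsum l p = lsum l q.
Proof.
  induction l as [|a l IH]; intros Hpq; simpl; [reflexivity|].
  rewrite (Hpq a (or_introl eq_refl)), IH by (intros; apply Hpq; right; auto).
  reflexivity.
Qed.

Lemma lsum_le {A : Type} (l : list A) (p q : A -> R) :
  (forall v, In v l -> p v <= q v) -> lsum l p <= lsum l q.
Proof.
  induction l as [|a l IH]; intros Hpq; simpl; [lra|].
  apply Rplus_le_compat; [apply Hpq; left; auto | apply IH; intros; apply Hpq; right; auto].
Qed.

Lemma lsum_plus {A : Type} (l : list A) (p q : A -> R) :
  lsum l (fun v => p v + q v) = lsum l p + lsum l q.
Proof. induction l as [|a l IH]; simpl; [lra|]. rewrite IH; lra. Qed.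

Lemma lsum_scal {A : Type} (l : list A) (c : R) (p : A -> R) :
  lsum l (fun v => c * p v) = c * lsum l p.
Proof. induction l as [|a l IH]; simpl; [lra|]. rewrite IH; lra. Qed.

Lemma lsum_zero {A : Type} (l : list A) : lsum l (fun _ => 0) = 0.
Proof. induction l as [|a l IH]; simpl; [lra|]. rewrite IH; lra. Qed.

Lemma lsum_nonneg {A : Type} (l : list A) (p : A -> R) :
  (forall v, In v l -> 0 <= p v) -> 0 <= lsum l p.
Proof. intros Hp. rewrite <- (lsum_zero l). apply lsum_le; exact Hp. Qed.

Lemma lsum_le_length {A : Type} (l : list A) (p : A -> R) (M : R) :
  (forall v, In v l -> p v <= M) -> lsum l p <= INR (length l) * M.
Proof.
  induction l as [|a l IH]; intros HM; simpl lsum; [simpl; lra|].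
  rewrite length_cons, S_INR.
  assert (lsum l p <= INR (length l) * M) by (apply IH; intros; apply HM; right; auto).
  specialize (HM a (or_introl eq_refl)). lra.
Qed.

Lemma INR_fold_sum {A : Type} (l : list A) (p : A -> nat) :
  INR (fold_right (fun v acc => (p v + acc)%nat) 0%nat l) = lsum l (fun v => INR (p v)).
Proof. induction l as [|a l IH]; simpl; [reflexivity|]. rewrite plus_INR, IH. reflexivity. Qed.

Lemma exists_argmax {A : Type} (l : list A) (p : A -> R) :
  l <> [] -> exists x, In x l /\ forall y, In y l -> p y <= p x.
Proof.
  induction l as [|a l IH]; intros Hne; [congruence|].
  destruct l as [|b l].
  - exists a. split; [left; auto|]. intros y [<-|[]]; lra.
  - destruct IH as [x [Hx Hmax]]; [congruence|].
    destruct (Rle_dec (p a) (p x)) as [Hax|Hxa].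
    + exists x. split; [right; exact Hx|]. intros y [<-|Hy]; auto.
    + exists a. split; [left; auto|]. intros y [<-|Hy]; [lra|].
      specialize (Hmax y Hy). lra.
Qed.

Lemma lsum_app_cons {A : Type} (l1 l2 : list A) (m : A) (p : A -> R) :
  lsum (l1 ++ m :: l2) p = p m + lsum (l1 ++ l2) p.
Proof. induction l1 as [|a l1 IH]; [reflexivity|]. simpl. unfold lsum in IH |- *. simpl. rewrite IH. lra. Qed.

Lemma split_max (S : list R) :
  NoDup S -> S <> [] ->
  exists m S', (forall p : R -> R, lsum S p = p m + lsum S' p) /\ NoDup S' /\
    (length S' < length S)%nat /\ (forall u, In u S' -> u < m).
Proof.
  intros HN Hne.
  destruct (exists_argmax S (fun x => x) Hne) as [m [Hm Hmax]].
  destruct (in_split m S Hm) as [l1 [l2 ->]].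
  exists m, (l1 ++ l2). repeat split.
  - intros p. apply lsum_app_cons.
  - eapply NoDup_remove_1; eauto.
  - rewrite !length_app. simpl. lia.
  - intros u Hu.
    assert (u <> m) by (intros ->; eapply NoDup_remove_2; eauto).
    assert (u <= m) by (apply Hmax; apply in_app_or in Hu; apply in_or_app;
                        destruct Hu; [left|right; right]; auto).
    lra.
Qed.

Lemma list_bounds (S : list R) :
  exists a b, a <= b /\ forall u, In u S -> a <= u <= b.
Proof.
  induction S as [|x S IH].
  - exists 0, 0. split; [lra|]. intros _ [].
  - destruct IH as [a [b [Hab Hb]]].
    exists (Rmin a x), (Rmax b x).
    pose proof (Rmin_l a x); pose proof (Rmin_r a x).
    pose proof (Rmax_l b x); pose proof (Rmax_r b x).
    split; [lra|]. intros u [<-|Hu]; [lra|]. specialize (Hb u Hu). lra.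
Qed.

(** * Rounding with [up] (up x = floor x + 1) *)

Lemma up_le (x y : R) : x <= y -> (up x <= up y)%Z.
Proof.
  intros Hxy. destruct (archimed x), (archimed y).
  assert (IZR (up x) < IZR (up y + 1)) by (rewrite plus_IZR; simpl; lra).
  apply lt_IZR in H3. lia.
Qed.

Lemma up_plus_IZR (x : R) (k : Z) : up (x + IZR k) = (up x + k)%Z.
Proof. symmetry. apply tech_up; rewrite plus_IZR; destruct (archimed x); lra. Qed.

Lemma up_0 : up 0 = 1%Z.
Proof. symmetry. apply tech_up; simpl; lra. Qed.

(** * Rounding cumulative masses *)

Definition mass_upto (f : R -> R) (S : list R) (x : R) : R :=
  lsum S (fun u => if Rle_dec u x then f u else 0).

Definition mass_below (f : R -> R) (S : list R) (x : R) : R :=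
  lsum S (fun u => if Rlt_dec u x then f u else 0).

Definition interval_mass (f : R -> R) (S : list R) (J : interval) : R :=
  lsum S (fun u => if in_intervalb J u then f u else 0).

Definition jump (f : R -> R) (S : list R) (v : R) : Z :=
  (up (mass_upto f S v) - up (mass_below f S v))%Z.

(* Weights are nonnegative since the cumulative mass is nondecreasing. *)
Lemma jump_nonneg (f : R -> R) (S : list R) (v : R) :
  (forall u, 0 <= f u) -> (0 <= jump f S v)%Z.
Proof.
  intros Hf. unfold jump.
  assert (mass_below f S v <= mass_upto f S v).
  { apply lsum_le; intros u _. specialize (Hf u). destruct Rle_dec, Rlt_dec; lra. }
  apply up_le in H. lia.
Qed.

Lemma mass_upto_split (f : R -> R) (S : list R) (a b : R) :
  a <= b -> mass_upto f S b = mass_below f S a + interval_mass f S (a, b).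
Proof.
  intros Hab. unfold mass_upto, mass_below, interval_mass.
  rewrite <- lsum_plus. apply lsum_ext; intros u _.
  unfold in_intervalb; simpl. destruct (Rle_dec u b), (Rlt_dec u a), (Rle_dec a u); lra.
Qed.

Lemma jump_telescope (f : R -> R) (S : list R) (a b : R) :
  NoDup S -> a <= b ->
  lsum S (fun v => if in_intervalb (a, b) v then IZR (jump f S v) else 0) =
  IZR (up (mass_upto f S b) - up (mass_below f S a)).
Proof.
  remember (length S) as n eqn:HL. revert S HL.
  induction n as [n IH] using lt_wf_ind. intros S HL HN Hab.
  destruct S as [|x S0].
  { unfold mass_upto, mass_below; simpl. rewrite Z.sub_diag. reflexivity. }
  destruct (split_max (x :: S0) HN ltac:(discriminate))
    as [m [S' [Hsum [HN' [Hlen Hlt]]]]].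
  set (T := lsum S' f).
  assert (Hupto : forall y, mass_upto f (x :: S0) y =
                            (if Rle_dec m y then f m else 0) + mass_upto f S' y)
    by (intros; apply Hsum).
  assert (Hbelow : forall y, mass_below f (x :: S0) y =
                             (if Rlt_dec m y then f m else 0) + mass_below f S' y)
    by (intros; apply Hsum).
  assert (Hupto_T : forall y, m <= y -> mass_upto f S' y = T).
  { intros y Hy. apply lsum_ext; intros u Hu. specialize (Hlt u Hu). destruct Rle_dec; lra. }
  assert (Hbelow_T : forall y, m <= y -> mass_below f S' y = T).
  { intros y Hy. apply lsum_ext; intros u Hu. specialize (Hlt u Hu). destruct Rlt_dec; lra. }
  assert (Hjump : forall v, In v S' -> jump f (x :: S0) v = jump f S' v).
  { intros v Hv. specialize (Hlt v Hv). unfold jump. rewrite Hupto, Hbelow.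
    destruct (Rle_dec m v); [lra|]. destruct (Rlt_dec m v); [lra|]. rewrite !Rplus_0_l. reflexivity. }
  rewrite Hsum, (lsum_ext S' _ (fun v => if in_intervalb (a, b) v then IZR (jump f S' v) else 0))
    by (intros v Hv; rewrite Hjump by exact Hv; reflexivity).
  rewrite (IH (length S') ltac:(lia) S' eq_refl HN' Hab).
  unfold in_intervalb, jump; simpl fst; simpl snd. rewrite !Hupto, !Hbelow.
  destruct (Rle_dec a m); destruct (Rle_dec m b).
  - destruct (Rle_dec m m); [|lra]. destruct (Rlt_dec m m); [lra|]. destruct (Rlt_dec m a); [lra|].
    rewrite (Hupto_T b), (Hupto_T m), (Hbelow_T m) by lra. rewrite !Rplus_0_l, <- plus_IZR.
    f_equal. lia.
  - destruct (Rlt_dec m a); [lra|]. rewrite !Rplus_0_l. reflexivity.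
  - destruct (Rlt_dec m a); [|lra]. rewrite (Hupto_T b), (Hbelow_T a) by lra.
    rewrite Rplus_0_l. f_equal. lia.
  - lra.
Qed.

Definition round_cover (f : R -> R) (S : list R) (v : R) : nat :=
  if in_dec Req_dec_T v S then Z.to_nat (jump f S v) else 0%nat.

Lemma INR_round_cover (f : R -> R) (S : list R) (v : R) :
  (forall u, 0 <= f u) -> In v S -> INR (round_cover f S v) = IZR (jump f S v).
Proof.
  intros Hf Hv. unfold round_cover. destruct in_dec; [|contradiction].
  rewrite INR_IZR_INZ, Z2Nat.id by (apply jump_nonneg; exact Hf). reflexivity.
Qed.

Lemma round_cover_total (f : R -> R) (S : list R) :
  NoDup S -> (forall u, 0 <= f u) -> INR (nat_total S (round_cover f S)) <= lsum S f.
Proof.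
  intros HN Hf. unfold nat_total. rewrite INR_fold_sum.
  destruct (list_bounds S) as [a [b [Hab Hb]]].
  rewrite (lsum_ext S _ (fun v => if in_intervalb (a, b) v then IZR (jump f S v) else 0)).
  2:{ intros v Hv. rewrite INR_round_cover by assumption. specialize (Hb v Hv).
      unfold in_intervalb; simpl. destruct (Rle_dec a v), (Rle_dec v b); auto; lra. }
  rewrite (jump_telescope f S a b HN Hab).
  assert (Hall : mass_upto f S b = lsum S f).
  { apply lsum_ext; intros u Hu. specialize (Hb u Hu). destruct Rle_dec; lra. }
  assert (Hnone : mass_below f S a = 0).
  { rewrite <- (lsum_zero S). apply lsum_ext; intros u Hu. specialize (Hb u Hu).
    destruct Rlt_dec; lra. }
  rewrite Hall, Hnone, up_0, minus_IZR. destruct (archimed (lsum S f)). simpl. lra.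
Qed.

Lemma round_cover_mass (f : R -> R) (S : list R) (h : list interval) (a b : R) (k : nat) :
  NoDup S -> (forall u, 0 <= f u) -> a <= b -> In (a, b) h ->
  INR k <= interval_mass f S (a, b) -> (k <= nat_mass S (round_cover f S) h)%nat.
Proof.
  intros HN Hf Hab Hin Hk. apply INR_le. unfold nat_mass.
  rewrite (INR_fold_sum S (fun v => if in_dintervalb h v then round_cover f S v else 0%nat)).
  apply Rle_trans with (lsum S (fun v => if in_intervalb (a, b) v then IZR (jump f S v) else 0)).
  - rewrite (jump_telescope f S a b HN Hab).
    assert (mass_below f S a + IZR (Z.of_nat k) <= mass_upto f S b)
      by (rewrite (mass_upto_split f S a b Hab), <- INR_IZR_INZ; lra).
    apply up_le in H. rewrite up_plus_IZR in H.
    rewrite INR_IZR_INZ. apply IZR_le. lia.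
  - apply lsum_le. intros v Hv. destruct (in_intervalb (a, b) v) eqn:Ein; [|apply pos_INR].
    assert (Hh : in_dintervalb h v = true) by (apply existsb_exists; eauto).
    rewrite Hh, INR_round_cover by assumption. lra.
Qed.

(** * Pigeonhole on the components of an edge *)

Lemma real_mass_le_sum (S : list R) (g : R -> R) (h : list interval) :
  (forall v, 0 <= g v) -> real_mass S g h <= lsum h (interval_mass g S).
Proof.
  intros Hg. induction h as [|J h IH].
  - change (real_mass S g []) with (lsum S (fun _ => 0)). rewrite lsum_zero. simpl. lra.
  - change (lsum (J :: h) (interval_mass g S)) with (interval_mass g S J + lsum h (interval_mass g S)).
    change (real_mass S g h) with (lsum S (fun v => if in_dintervalb h v then g v else 0)) in IH.
    change (real_mass S g (J :: h)) with (lsum S (fun v => if in_dintervalb (J :: h) v then g v else 0)).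
    eapply Rle_trans; [|apply Rplus_le_compat_l; exact IH].
    unfold interval_mass. rewrite <- lsum_plus. apply lsum_le; intros v _.
    unfold in_dintervalb; simpl. fold (in_dintervalb h v).
    specialize (Hg v). destruct (in_intervalb J v), (in_dintervalb h v); simpl; lra.
Qed.

(* Some component of an edge with positive mass carries at least a
   1/length(h) share of its mass. *)
Lemma heaviest_component (S : list R) (g : R -> R) (h : list interval) :
  (forall v, 0 <= g v) -> 0 < real_mass S g h ->
  exists J, In J h /\ real_mass S g h <= INR (length h) * interval_mass g S J.
Proof.
  intros Hg Hpos.
  assert (Hne : h <> []).
  { intros ->. change (real_mass S g []) with (lsum S (fun _ => 0)) in Hpos.
    rewrite lsum_zero in Hpos. lra. }
  destruct (exists_argmax h (interval_mass g S) Hne) as [J [HJ Hmax]].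
  exists J. split; [exact HJ|].
  eapply Rle_trans; [apply real_mass_le_sum; exact Hg|]. apply lsum_le_length; exact Hmax.
Qed.

Lemma round_cover_edge (d : nat) (S : list R) (g : R -> R) (h : list interval) (k : nat) :
  NoDup S -> (forall v, 0 <= g v) ->
  (length h <= d)%nat -> Forall (fun J => fst J <= snd J) h ->
  INR k <= real_mass S g h ->
  (k <= nat_mass S (round_cover (fun v => (INR d * g v)%R) S) h)%nat.
Proof.
  intros HN Hg Hlen Hcomp Hk.
  destruct (Nat.eq_dec k 0) as [->|Hk0]; [apply Nat.le_0_l |].
  assert (Hpos : 0 < real_mass S g h) by (apply Rlt_le_trans with (INR k); [apply lt_0_INR; lia | exact Hk]).
  destruct (heaviest_component S g h Hg Hpos) as [[a b] [HJ Hshare]].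
  rewrite Forall_forall in Hcomp. specialize (Hcomp _ HJ). simpl in Hcomp.
  apply (round_cover_mass _ S h a b); [exact HN | intros u; apply Rmult_le_pos; [apply pos_INR | apply Hg]
                          | exact Hcomp | exact HJ |].
  unfold interval_mass.
  rewrite (lsum_ext S _ (fun u => INR d * (if in_intervalb (a, b) u then g u else 0)))
    by (intros; destruct in_intervalb; lra).
  rewrite lsum_scal. fold (interval_mass g S (a, b)).
  assert (0 <= interval_mass g S (a, b))
    by (apply lsum_nonneg; intros; destruct in_intervalb; [apply Hg | lra]).
  assert (INR (length h) <= INR d) by (apply le_INR; exact Hlen).
  nra.
Qed.

Lemma scaled_round_cover (d : nat) (H : list (list interval)) (w : nat -> nat)
    (S : list R) (g : R -> R) :
  Forall (is_dinterval d) H -> is_frac_w_cover H w S g ->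
  is_w_cover H w S (round_cover (fun v => INR d * g v) S) /\
  INR (nat_total S (round_cover (fun v => INR d * g v) S)) <= INR d * real_total S g.
Proof.
  intros HF [HN [Hg [_ Hcov]]].
  split; [split; [exact HN | split] |].
  - intros v Hv. unfold round_cover. destruct in_dec; [contradiction | reflexivity].
  - intros i Hi.
    assert (Hh : is_dinterval d (nth i H [])) by (rewrite Forall_forall in HF; apply HF, nth_In, Hi).
    destruct Hh as [Hlen [Hcomp _]].
    exact (round_cover_edge d S g _ (w i) HN Hg Hlen Hcomp (Hcov i Hi)).
  - eapply Rle_trans; [apply round_cover_total; [exact HN |]|].
    + intros u. apply Rmult_le_pos; [apply pos_INR | apply Hg].
    + rewrite lsum_scal. right; reflexivity.
Qed.

Theorem theorem1p9 (d : nat) (H : list (list interval)) (w : nat -> nat)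
    (t : nat) (ts : R) :
  (1 <= d)%nat ->
  Forall (is_dinterval d) H ->
  tau_w H w t ->
  tau_star_w H w ts ->
  INR t <= INR d * ts.
Proof.
  intros Hd HF [_ Hmin] [_ Hglb].
  assert (Hd0 : 0 < INR d) by (apply lt_0_INR; lia).
  assert (Hbound : INR t / INR d <= ts).
  { apply Hglb. intros x [S [g [Hc <-]]].
    destruct (scaled_round_cover d H w S g HF Hc) as [Hic Htotal].
    pose proof (le_INR _ _ (Hmin _ _ Hic)) as Hopt.
    apply (Rmult_le_reg_l (INR d)); [exact Hd0|].
    field_simplify; lra. }
  apply (Rmult_le_compat_l (INR d)) in Hbound; [|lra].
  field_simplify in Hbound; lra.
Qed.
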